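(* Let $T>0$, $p>1$, $E_3\ge0$, $\gamma\in(0,pT)$, and $\epsilon\in(0,1)$. Let $\varphi,\varphi_\epsilon\in L^2(\mathbb{R})$ with $\|\varphi-\varphi_\epsilon\|\le\epsilon$, and let $u$ be the exact solution of the backward heat problem with final value $\varphi$, satisfying $$\int_{-\infty}^{\infty}e^{2\gamma\xi^2}|\hat u(\xi,0)|^2\,d\xi\le E_3^2.$$ Choose $\beta=\epsilon$, let $v_\epsilon=R_\beta\varphi_\epsilon$, and set $h=\min\{\gamma,(p-1)T\}$. Then for every $t\in[0,T]$, $$\|u(\cdot,t)-v_\epsilon(\cdot,t)\|\le \epsilon^{\frac{t+h}{pT}}(E_3+1).$$ In particular, $\|u(\cdot,0)-v_\epsilon(\cdot,0)\|\le \epsilon^{\frac{h}{pT}}(E_3+1)$.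
   Context: $\|\cdot\|$ denotes the norm of $L^2(\mathbb{R})$. The Fourier transform is $\hat\psi(\xi)=\frac{1}{\sqrt{2\pi}}\int_{-\infty}^{\infty}\psi(x)e^{-i\xi x}\,dx$ (extended to $L^2(\mathbb{R})$ as a unitary map). Exact solution: for $\varphi\in L^2(\mathbb{R})$, the exact solution $u$ of $u_t-u_{xx}=0$ on $\mathbb{R}\times(0,T)$, $u(\cdot,T)=\varphi$, is given by $\hat u(\xi,t)=e^{(T-t)\xi^2}\hat\varphi(\xi)$ for $t\in[0,T]$. Regularized solution: for $\beta>0$ and $\psi\in L^2(\mathbb{R})$, $R_\beta\psi$ is the function whose Fourier transform in $x$ is $\widehat{(R_\beta\psi)}(\xi,t)=\frac{e^{-t\xi^2}}{\beta e^{(p-1)T\xi^2}+e^{-T\xi^2}}\hat\psi(\xi)=\frac{e^{(T-t)\xi^2}}{1+\beta e^{pT\xi^2}}\hat\psi(\xi)$, $t\in[0,T]$. *)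

From HB Require Import structures.
From mathcomp Require Import all_boot all_order all_algebra.
From mathcomp Require Import all_classical all_reals all_analysis.
From mathcomp Require Import complex.

Set Implicit Arguments.
Unset Strict Implicit.
Unset Printing Implicit Defensive.

Import Order.TTheory GRing.Theory Num.Theory.
Import numFieldNormedType.Exports.
Local Open Scope classical_set_scope.
Local Open Scope ring_scope.
Local Open Scope complex_scope.

Section L2.
Variable R : realType.

Definition creal (z : R[i]) : R := @complex.Re R z.
Definition cimag (z : R[i]) : R := @complex.Im R z.

Definition cmod2 (z : R[i]) : R := (creal z) ^+ 2 + (cimag z) ^+ 2.

Definition L2fun (f : R -> R[i]) : Prop :=
  [/\ measurable_fun setT (creal \o f), measurable_fun setT (cimag \o f)
    & (\int[@lebesgue_measure R]_x (cmod2 (f x))%:E < +oo)%E].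

Definition L1fun (f : R -> R[i]) : Prop :=
  (@lebesgue_measure R).-integrable setT (EFin \o (creal \o f)) /\
  (@lebesgue_measure R).-integrable setT (EFin \o (cimag \o f)).

Definition L2norm (f : R -> R[i]) : R :=
  Num.sqrt (fine (\int[@lebesgue_measure R]_x (cmod2 (f x))%:E)).

(* the Fourier integral  1/sqrt(2 pi) \int f(x) e^{-i xi x} dx  (for f in L^1),
   written through real and imaginary parts:
   f e^{-i xi x} = (Re f cos + Im f sin) + i (Im f cos - Re f sin). *)
Definition fourier_integral (f : R -> R[i]) (xi : R) : R[i] :=
  ((Num.sqrt (2 * pi))^-1)%:C *
  Complex
    (Rintegral (@lebesgue_measure R) setT
       (fun x => creal (f x) * cos (xi * x) + cimag (f x) * sin (xi * x)))
    (Rintegral (@lebesgue_measure R) setT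
       (fun x => cimag (f x) * cos (xi * x) - creal (f x) * sin (xi * x))).

Definition aeeqL (f g : R -> R[i]) : Prop :=
  {ae @lebesgue_measure R, forall x, f x = g x}.

(* F is the Fourier transform on L^2(R): the unitary map on L^2(R)
   extending the Fourier integral from L^1 \cap L^2. Such a map exists
   (Plancherel) and is unique up to a.e. equality. *)
Definition is_L2_fourier (F : (R -> R[i]) -> (R -> R[i])) : Prop :=
  [/\ (forall f, L2fun f -> L2fun (F f)),
      (forall f g (a b : R[i]), L2fun f -> L2fun g ->
         aeeqL (F (fun x => a * f x + b * g x))
               (fun xi => a * F f xi + b * F g xi)),
      (forall f, L2fun f -> L2norm (F f) = L2norm f),
      (forall f, L2fun f -> L1fun f -> aeeqL (F f) (fourier_integral f))
    & (forall g, L2fun g -> exists2 f, L2fun f & aeeqL (F f) g)].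

End L2.

(* On the Fourier side the error splits as
     u^(t) - v^(t) = k1 (phi^ - phi_eps^) + k2 u^(0),
   k1 = e^((T-t)xi^2) / q,  k2 = eps e^((pT-t)xi^2) / q,  q = 1 + eps e^(pT xi^2).
   Writing eps = e^l, each numerator is e^(l + m xi^2) with the exponent a convex
   combination of l and l + pT xi^2, which gives k1 <= eps^(c-1) and
   k2 <= eps^c e^(gamma xi^2) for c = (t + h) / (pT).  Plancherel and the
   weighted inequality |a + b|^2 <= (1 + s)|a|^2 + (1 + 1/s)|b|^2 then bound the
   squared error by eps^(2c) ((1 + s) + (1 + 1/s) E3^2) for every s > 0, and the
   infimum over s is (eps^c (1 + E3))^2. *)

From HB Require Import structures.
From mathcomp Require Import all_boot all_order all_algebra.
From mathcomp Require Import all_classical all_reals all_analysis.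
From mathcomp Require Import complex.
From mathcomp Require Import ring lra measurable_realfun.

Set Implicit Arguments.
Unset Strict Implicit.
Unset Printing Implicit Defensive.

Import Order.TTheory GRing.Theory Num.Theory.
Import numFieldNormedType.Exports.
Local Open Scope classical_set_scope.
Local Open Scope ring_scope.
Local Open Scope complex_scope.

Section RealBounds.
Variable R : realType.

Lemma expR_scale_le1D (th z : R) : 0 <= th <= 1 -> expR (th * z) <= 1 + expR z.
Proof.
move=> /andP[th0 th1]; have ez := expR_ge0 z.
have [z_le0|z_gt0] := leP z 0.
- have : th * z <= 0 by nra.
  by rewrite -ler_expR expR0; lra.
- have : th * z <= z by nra.
  by rewrite -ler_expR; lra.
Qed.

(* Writing [eps = e^l], the exponent [l + m x] is a convex combination of
   [l] and [l + q x] whose weight on [l] is at least [c]. *)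
Lemma le_powR_regularization (eps c q m x : R) :
  0 < eps <= 1 -> 0 <= c <= 1 -> 0 < q -> m <= q * (1 - c) -> 0 <= x ->
  eps * expR (m * x) <= eps `^ c * (1 + eps * expR (q * x)).
Proof.
move=> /andP[eps_gt0 eps_le1] /andP[c0 c1] q_gt0 hm x0.
rewrite /powR gt_eqF //; set l := ln eps.
have l_le0 : l <= 0 by exact: ln_le0.
rewrite -[in X in X <= _](lnK eps_gt0) -[in X in _ * (1 + X * _)](lnK eps_gt0).
rewrite -/l -!expRD.
have ec := expR_gt0 (c * l).
have [m_le0|m_gt0] := leP m 0.
- apply: (@le_trans _ _ (expR (c * l))); first by rewrite ler_expR; nra.
  by rewrite -[leLHS]mulr1 ler_pM2l // lerDl expR_ge0.
- pose th := m / q.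
  have m_th : m = th * q by rewrite /th mulrVK // unitfE gt_eqF.
  have th0 : 0 <= th by rewrite /th divr_ge0 // ltW.
  have th1 : th <= 1 - c by rewrite /th ler_pdivrMr // mulrC.
  have -> : l + m * x = (1 - th) * l + th * (l + q * x) by rewrite m_th; ring.
  rewrite (expRD ((1 - th) * l)); apply: ler_pM; rewrite ?expR_ge0 //.
    by rewrite ler_expR; nra.
  by apply: expR_scale_le1D; apply/andP; split; lra.
Qed.

Lemma sqrD_le_Young (a b s : R) : 0 < s ->
  (a + b) ^+ 2 <= (1 + s) * a ^+ 2 + (1 + s^-1) * b ^+ 2.
Proof.
move=> s_gt0; rewrite -subr_ge0.
have -> : (1 + s) * a ^+ 2 + (1 + s^-1) * b ^+ 2 - (a + b) ^+ 2 =
    s^-1 * (s * a - b) ^+ 2 by field; rewrite gt_eqF.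
by rewrite mulr_ge0 ?sqr_ge0 // invr_ge0 ltW.
Qed.

(* The infimum over [s] of the right-hand side is [(a + b)^2], attained at
   [s = b / a]; for [b = 0] it is only approached as [s -> 0]. *)
Lemma le_add_of_sqr_le_Young (N a b : R) : 0 <= N -> 0 < a -> 0 <= b ->
  (forall s, 0 < s -> N ^+ 2 <= (1 + s) * a ^+ 2 + (1 + s^-1) * b ^+ 2) ->
  N <= a + b.
Proof.
move=> N0 a_gt0 b0 hN; rewrite -(ler_pXn2r (_ : 0 < 2)%N) ?nnegrE //; last lra.
have [b_gt0|b_le0] := ltP 0 b.
- have := hN (b / a) (divr_gt0 b_gt0 a_gt0).
  suff -> : (1 + b / a) * a ^+ 2 + (1 + (b / a)^-1) * b ^+ 2 = (a + b) ^+ 2 by [].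
  by field; rewrite ?gt_eqF.
- have b0' : b = 0 by lra.
  rewrite b0' addr0 leNgt; apply/negP => hNa.
  have a2 : 0 < a ^+ 2 by rewrite exprn_gt0.
  pose s := (N ^+ 2 - a ^+ 2) / (2 * a ^+ 2).
  have s_gt0 : 0 < s by rewrite divr_gt0 //; lra.
  have := hN s s_gt0; rewrite b0' expr0n /= mulr0 addr0.
  have -> : (1 + s) * a ^+ 2 = (a ^+ 2 + N ^+ 2) / 2 by rewrite /s; field; rewrite gt_eqF.
  lra.
Qed.
End RealBounds.

Section ComplexModulus.
Variable R : realType.
Implicit Types (a b z w : R[i]) (k : R).

Lemma cmod2_ge0 z : 0 <= cmod2 z.
Proof. by rewrite /cmod2 addr_ge0 ?sqr_ge0. Qed.

Lemma cmod2N z : cmod2 (- z) = cmod2 z.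
Proof. by case: z => x y; rewrite /cmod2 /creal /cimag /= !sqrrN. Qed.

Lemma cmod2_realM k z : cmod2 (k%:C * z) = k ^+ 2 * cmod2 z.
Proof. by case: z => x y; rewrite /cmod2 /creal /cimag /=; ring. Qed.

Lemma cmod2D_le_Young (s : R) a b : 0 < s ->
  cmod2 (a + b) <= (1 + s) * cmod2 a + (1 + s^-1) * cmod2 b.
Proof.
case: a => a1 a2; case: b => b1 b2 s_gt0; rewrite /cmod2 /creal /cimag /=.
have := sqrD_le_Young a1 b1 s_gt0; have := sqrD_le_Young a2 b2 s_gt0.
rewrite !mulrDr; lra.
Qed.

Lemma cmod2B_le a b : cmod2 (a - b) <= 2 * cmod2 a + 2 * cmod2 b.
Proof.
by have := cmod2D_le_Young a (- b) ltr01; rewrite invr1 cmod2N.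
Qed.

Lemma cmod2_real_combination_le (s k1 k2 K1 K2 : R) z w : 0 < s ->
  0 <= k1 <= K1 -> 0 <= k2 <= K2 ->
  cmod2 (k1%:C * z + k2%:C * w) <=
    (1 + s) * K1 ^+ 2 * cmod2 z + (1 + s^-1) * K2 ^+ 2 * cmod2 w.
Proof.
move=> s_gt0 /andP[k10 k1K] /andP[k20 k2K].
apply: (le_trans (cmod2D_le_Young _ _ s_gt0)); rewrite !cmod2_realM.
have sq_le k K : 0 <= k -> k <= K -> k ^+ 2 <= K ^+ 2.
  by move=> k0 kK; rewrite ler_pXn2r ?nnegrE // (le_trans k0).
have s1 : 0 < 1 + s by rewrite addr_gt0.
have s1' : 0 < 1 + s^-1 by rewrite addr_gt0 ?invr_gt0.
by apply: lerD; rewrite -mulrA ler_pM2l //; apply: ler_wpM2r; rewrite ?cmod2_ge0 ?sq_le.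
Qed.

Lemma regularization_error_split (eps e a b eT : R) (z z' : R[i]) :
  1 + eps * a != 0 -> b * eT = e * a ->
  e%:C * z - (e / (1 + eps * a))%:C * z' =
  (e / (1 + eps * a))%:C * (z - z') + (eps * b / (1 + eps * a))%:C * (eT%:C * z).
Proof.
move=> q0 hb.
have e_split : e = e / (1 + eps * a) + eps * b / (1 + eps * a) * eT.
  have -> : eps * b / (1 + eps * a) * eT = eps * (e * a) / (1 + eps * a).
    by rewrite -hb; ring.
  by field.
by rewrite {1}e_split rmorphD rmorphM /=; ring.
Qed.

End ComplexModulus.

Section L2Estimates.
Variable R : realType.
Local Notation mu := (@lebesgue_measure R).
Implicit Types f g : R -> R[i].

Lemma measurable_cmod2 f :
  measurable_fun setT (@creal R \o f) -> measurable_fun setT (@cimag R \o f) ->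
  measurable_fun setT (fun x => cmod2 (f x)).
Proof. by move=> mre mim; apply: measurable_funD; apply: measurable_funX. Qed.

Lemma L2fun_measurable_cmod2 f : L2fun f -> measurable_fun setT (fun x => cmod2 (f x)).
Proof. by case=> mre mim _; exact: measurable_cmod2. Qed.

Lemma ge0_integralZl_real (k : R) (h : R -> R) :
  0 <= k -> measurable_fun setT h -> (forall x, 0 <= h x) ->
  (\int[mu]_x (k * h x)%:E = k%:E * \int[mu]_x (h x)%:E)%E.
Proof.
move=> k0 mh h0; under eq_integral do rewrite EFinM.
by rewrite ge0_integralZl_EFin //; [move=> x _; rewrite lee_fin|apply/measurable_EFinP].
Qed.

Lemma L2norm_sqrE f : L2fun f -> (\int[mu]_x (cmod2 (f x))%:E = (L2norm f ^+ 2)%:E)%E.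
Proof.
case=> _ _ f_fin.
have int_ge0 : (0 <= \int[mu]_x (cmod2 (f x))%:E)%E.
  by apply: integral_ge0 => x _; rewrite lee_fin cmod2_ge0.
by rewrite /L2norm sqr_sqrtr ?fine_ge0 // fineK // ge0_fin_numE.
Qed.

Lemma L2funB f g : L2fun f -> L2fun g -> L2fun (fun x => f x - g x).
Proof.
move=> Lf Lg; have mf := L2fun_measurable_cmod2 Lf; have mg := L2fun_measurable_cmod2 Lg.
case: Lf Lg => fre fim f_fin [gre gim g_fin].
have mre : measurable_fun setT (@creal R \o (fun x => f x - g x)).
  have -> : @creal R \o (fun x => f x - g x) = (@creal R \o f) \- (@creal R \o g).
    by apply: funext => x /=; case: (f x); case: (g x).
  exact: measurable_funB.
have mim : measurable_fun setT (@cimag R \o (fun x => f x - g x)).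
  have -> : @cimag R \o (fun x => f x - g x) = (@cimag R \o f) \- (@cimag R \o g).
    by apply: funext => x /=; case: (f x); case: (g x).
  exact: measurable_funB.
split => //.
have mcst2 (h : R -> R[i]) : measurable_fun setT (fun x => cmod2 (h x)) ->
    measurable_fun setT (fun x => (2 * cmod2 (h x))%:E).
  by move=> mh; apply/measurable_EFinP; apply: measurable_funM => //; exact: measurable_cst.
apply: (@le_lt_trans _ _ (\int[mu]_x ((2 * cmod2 (f x))%:E + (2 * cmod2 (g x))%:E))%E).
  apply: ge0_le_integral => //.
  - by move=> x _; rewrite lee_fin cmod2_ge0.
  - by apply/measurable_EFinP; exact: measurable_cmod2.
  - by apply: emeasurable_funD; apply: mcst2.
  - by move=> x _; rewrite -EFinD lee_fin cmod2B_le.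
rewrite ge0_integralD //; try by [apply: mcst2|move=> x _; rewrite lee_fin mulr_ge0 ?cmod2_ge0].
rewrite !ge0_integralZl_real //; last 2 first.
- by move=> x; exact: cmod2_ge0.
- by move=> x; exact: cmod2_ge0.
by rewrite lte_add_pinfty // lte_mul_pinfty.
Qed.

Lemma L2norm_sqr_le_ae f g (k : R -> R) (A B C : R) :
  L2fun f -> L2fun g -> measurable_fun setT k -> (forall x, 0 <= k x) ->
  0 <= A -> 0 <= B -> (\int[mu]_x (k x)%:E <= C%:E)%E ->
  {ae mu, forall x, cmod2 (f x) <= A * cmod2 (g x) + B * k x} ->
  L2norm f ^+ 2 <= A * L2norm g ^+ 2 + B * C.
Proof.
move=> Lf Lg mk k0 A0 B0 kC hfg.
have mg := L2fun_measurable_cmod2 Lg.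
have mAg : measurable_fun setT (fun x => (A * cmod2 (g x))%:E).
  by apply/measurable_EFinP; apply: measurable_funM => //; exact: measurable_cst.
have mBk : measurable_fun setT (fun x => (B * k x)%:E).
  by apply/measurable_EFinP; apply: measurable_funM => //; exact: measurable_cst.
rewrite -lee_fin -(L2norm_sqrE Lf).
apply: (@le_trans _ _ (\int[mu]_x ((A * cmod2 (g x))%:E + (B * k x)%:E))%E).
  apply: ae_ge0_le_integral => //.
  - by move=> x _; rewrite lee_fin cmod2_ge0.
  - by apply/measurable_EFinP; exact: L2fun_measurable_cmod2.
  - by move=> x _; rewrite -EFinD lee_fin addr_ge0 ?mulr_ge0 ?cmod2_ge0.
  - exact: emeasurable_funD.
  - apply: (@filterS _ _ (ae_filter_ringOfSetsType _) _ _ _ hfg).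
    by move=> x hx _; rewrite -EFinD lee_fin.
rewrite ge0_integralD //; try by move=> x _; rewrite lee_fin mulr_ge0 ?cmod2_ge0.
rewrite !ge0_integralZl_real ?(L2norm_sqrE Lg) //; last by move=> x; exact: cmod2_ge0.
by rewrite EFinD (EFinM B) leeD2l //; apply: lee_wpmul2l; rewrite ?lee_fin.
Qed.

Lemma fourierB (F : (R -> R[i]) -> R -> R[i]) f g : is_L2_fourier F ->
  L2fun f -> L2fun g -> aeeqL (F (fun x => f x - g x)) (fun xi => F f xi - F g xi).
Proof.
case=> _ Flin _ _ _ Lf Lg; have := Flin _ _ 1 (-1) Lf Lg.
rewrite (_ : (fun x => _) = fun x => f x - g x) ?funeqE => [|x]; last by rewrite mul1r mulN1r.
by apply: (@filterS _ _ (ae_filter_ringOfSetsType _)) => xi ->; rewrite mul1r mulN1r.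
Qed.

End L2Estimates.

Section BackwardHeat.
Variable R : realType.
Local Notation mu := (@lebesgue_measure R).
Variable F : (R -> R[i]) -> R -> R[i].
Hypothesis F_fourier : is_L2_fourier F.
Variables (T p gamma eps E3 : R) (phi phi_eps : R -> R[i]) (u v : R -> R -> R[i]).
Hypotheses (T_gt0 : 0 < T) (p_gt1 : 1 < p) (gamma_gt0 : 0 < gamma) (E3_ge0 : 0 <= E3).
Hypotheses (eps_gt0 : 0 < eps) (eps_le1 : eps <= 1).
Hypotheses (L2phi : L2fun phi) (L2phi_eps : L2fun phi_eps).
Hypothesis data_error : L2norm (fun x => phi x - phi_eps x) <= eps.
Hypothesis u_exact : forall t, 0 <= t <= T ->
  L2fun (u t) /\ aeeqL (F (u t)) (fun xi => (expR ((T - t) * xi ^+ 2))%:C * F phi xi).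
Hypothesis u0_smooth :
  (\int[mu]_xi (expR (2 * gamma * xi ^+ 2) * cmod2 (F (u 0) xi))%:E <= (E3 ^+ 2)%:E)%E.
Hypothesis v_regularized : forall t, 0 <= t <= T ->
  L2fun (v t) /\ aeeqL (F (v t)) (fun xi => (expR ((T - t) * xi ^+ 2)
    / (1 + eps * expR (p * T * xi ^+ 2)))%:C * F phi_eps xi).

Local Notation h := (Num.min gamma ((p - 1) * T)).
Local Notation rate t := (eps `^ ((t + h) / (p * T))).

Let pT_gt0 : 0 < p * T. Proof. by rewrite mulr_gt0 // (lt_trans ltr01). Qed.

Lemma rate_exponent_le t : 0 <= t <= T ->
  0 <= (t + h) / (p * T) <= 1 /\ p * T * (1 - (t + h) / (p * T)) = p * T - t - h.
Proof.
move=> /andP[t0 tT]; have h_le : h <= (p - 1) * T by rewrite ge_min lexx orbT.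
have h_gt0 : 0 < h by rewrite lt_min gamma_gt0 mulr_gt0 // subr_gt0.
split; last by rewrite mulrBr mulr1 (mulrC (p * T)) divfK ?gt_eqF // opprD addrA.
rewrite divr_ge0 ?ler_pdivrMr ?mul1r ?(ltW pT_gt0) //=; lra.
Qed.

Lemma fourier_error_le t s : 0 <= t <= T -> 0 < s ->
  {ae mu, forall xi, cmod2 (F (fun x => u t x - v t x) xi) <=
     (1 + s) * (rate t / eps) ^+ 2 * cmod2 (F (fun x => phi x - phi_eps x) xi)
     + (1 + s^-1) * rate t ^+ 2 * (expR (2 * gamma * xi ^+ 2) * cmod2 (F (u 0) xi))}.
Proof.
move=> tT s_gt0; have T0 : (0 : R) <= 0 <= T by rewrite lexx (ltW T_gt0).
have [Lut Hut] := u_exact tT; have [Lvt Hvt] := v_regularized tT.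
have [_ Hu0] := u_exact T0.
have HD := fourierB F_fourier Lut Lvt; have HG := fourierB F_fourier L2phi L2phi_eps.
have [c01 hc] := rate_exponent_le tT.
have eps01 : 0 < eps <= 1 by rewrite eps_gt0.
have h_le_gamma : h <= gamma by rewrite ge_min lexx.
have h_le : h <= p * T - T by rewrite ge_min mulrBl mul1r lexx orbT.
(* The typeclass hint for this instance does not fire on Lebesgue measure. *)
have ae_filter : Filter (nbhs (almost_everywhere mu)) := ae_filter_ringOfSetsType mu.
near=> xi.
have [ED EG] : F (fun x => u t x - v t x) xi = F (u t) xi - F (v t) xi
    /\ F (fun x => phi x - phi_eps x) xi = F phi xi - F phi_eps xi.
  by split; near: xi; [exact: HD|exact: HG].
have [Eut Evt Eu0] : [/\ F (u t) xi = (expR ((T - t) * xi ^+ 2))%:C * F phi xi,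
    F (v t) xi = (expR ((T - t) * xi ^+ 2)
      / (1 + eps * expR (p * T * xi ^+ 2)))%:C * F phi_eps xi
  & F (u 0) xi = (expR ((T - 0) * xi ^+ 2))%:C * F phi xi].
  by split; near: xi; [exact: Hut|exact: Hvt|exact: Hu0].
have x2 : 0 <= xi ^+ 2 := sqr_ge0 xi.
set X := rate t; set g := expR (gamma * xi ^+ 2).
set e := expR ((T - t) * xi ^+ 2); set a := expR (p * T * xi ^+ 2).
set b := expR ((p * T - t) * xi ^+ 2).
have q_gt0 : 0 < 1 + eps * a by rewrite ltr_wpDr // mulr_ge0 ?expR_ge0 ?ltW.
have hb : b * expR ((T - 0) * xi ^+ 2) = e * a.
  by rewrite -!expRD; congr expR; ring.
rewrite ED Eut Evt (regularization_error_split _ _ (lt0r_neq0 q_gt0) hb) -EG -Eu0.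
have -> : expR (2 * gamma * xi ^+ 2) = g ^+ 2 by rewrite /g [RHS]expr2 -expRD; congr expR; ring.
set w := F (u 0) xi.
rewrite (_ : _ * _ * (_ * cmod2 w) = (1 + s^-1) * (X * g) ^+ 2 * cmod2 w); last by ring.
have hm1 : T - t <= p * T * (1 - (t + h) / (p * T)) by rewrite hc; lra.
have hm2 : p * T - t - gamma <= p * T * (1 - (t + h) / (p * T)) by rewrite hc; lra.
have := le_powR_regularization eps01 c01 pT_gt0 hm1 x2.
have := le_powR_regularization eps01 c01 pT_gt0 hm2 x2.
rewrite -/e -/a -/X => bound_k2 bound_k1.
apply: cmod2_real_combination_le => //; apply/andP; split.
- by rewrite divr_ge0 ?expR_ge0 ?ltW.
- by rewrite ler_pdivrMr // mulrAC ler_pdivlMr // mulrC.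
- by rewrite divr_ge0 ?mulr_ge0 ?expR_ge0 ?ltW.
- have -> : b = expR ((p * T - t - gamma) * xi ^+ 2) * g by rewrite -expRD; congr expR; ring.
  rewrite ler_pdivrMr // mulrA (mulrAC X).
  by apply: ler_wpM2r; rewrite ?expR_ge0.
Unshelve. all: by end_near.
Qed.

Lemma L2norm_error_le t : 0 <= t <= T ->
  L2norm (fun x => u t x - v t x) <= rate t * (E3 + 1).
Proof.
move=> tT; have T0 : (0 : R) <= 0 <= T by rewrite lexx (ltW T_gt0).
have [Lut _] := u_exact tT; have [Lvt _] := v_regularized tT; have [Lu0 _] := u_exact T0.
have LD := L2funB Lut Lvt; have LG := L2funB L2phi L2phi_eps.
case: F_fourier => F_L2 _ F_norm _ _.
have X_gt0 : 0 < rate t := powR_gt0 _ eps_gt0.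
have m_weight : measurable_fun setT
    (fun xi : R => expR (2 * gamma * xi ^+ 2) * cmod2 (F (u 0) xi)).
  apply: measurable_funM; last exact: L2fun_measurable_cmod2 (F_L2 _ Lu0).
  by apply: measurableT_comp => //; apply: measurable_funM.
rewrite mulrDr mulr1 addrC.
apply: le_add_of_sqr_le_Young => [|//||s s_gt0]; first exact: sqrtr_ge0.
  exact: mulr_ge0 (ltW X_gt0) E3_ge0.
rewrite -(F_norm _ LD).
have s_inv_gt0 : 0 < 1 + s^-1 by rewrite addr_gt0 ?invr_gt0.
apply: le_trans (L2norm_sqr_le_ae (F_L2 _ LD) (F_L2 _ LG) m_weight _ _ _ u0_smooth
  (fourier_error_le tT s_gt0)) _.
- by move=> xi; rewrite mulr_ge0 ?expR_ge0 ?cmod2_ge0.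
- by rewrite mulr_ge0 ?sqr_ge0 // addr_ge0 ?ltW.
- by rewrite mulr_ge0 ?sqr_ge0 ?ltW.
rewrite (F_norm _ LG); apply: lerD; last by rewrite exprMn [in leRHS]mulrA.
have -> : (1 + s) * rate t ^+ 2 = (1 + s) * (rate t / eps) ^+ 2 * eps ^+ 2.
  by field; rewrite gt_eqF.
apply: ler_wpM2l; first by rewrite mulr_ge0 ?sqr_ge0 // addr_ge0 ?ltW.
by rewrite ler_pXn2r ?nnegrE ?(ltW eps_gt0) // sqrtr_ge0.
Qed.

End BackwardHeat.

Theorem theorem4 (R : realType) (F : (R -> R[i]) -> (R -> R[i]))
  (T p E3 gamma eps : R) (phi phi_eps : R -> R[i]) (u v : R -> R -> R[i]) :
  is_L2_fourier F ->
  0 < T -> 1 < p -> 0 <= E3 -> 0 < gamma -> gamma < p * T ->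
  0 < eps -> eps < 1 ->
  L2fun phi -> L2fun phi_eps ->
  L2norm (fun x => phi x - phi_eps x) <= eps ->
  (forall t, 0 <= t <= T ->
     L2fun (u t) /\
     aeeqL (F (u t)) (fun xi => (expR ((T - t) * xi ^+ 2))%:C * F phi xi)) ->
  (\int[@lebesgue_measure R]_xi
      (expR (2 * gamma * xi ^+ 2) * cmod2 (F (u 0) xi))%:E <= (E3 ^+ 2)%:E)%E ->
  (forall t, 0 <= t <= T ->
     L2fun (v t) /\
     aeeqL (F (v t))
       (fun xi => (expR ((T - t) * xi ^+ 2)
                   / (1 + eps * expR (p * T * xi ^+ 2)))%:C * F phi_eps xi)) ->
  let h := Num.min gamma ((p - 1) * T) in
  (forall t, 0 <= t <= T ->
     L2norm (fun x => u t x - v t x) <= eps `^ ((t + h) / (p * T)) * (E3 + 1))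
  /\ L2norm (fun x => u 0 x - v 0 x) <= eps `^ (h / (p * T)) * (E3 + 1).
Proof.
move=> F_fourier T_gt0 p_gt1 E3_ge0 gamma_gt0 _ eps_gt0 eps_lt1 L2phi L2phi_eps
  data_error u_exact u0_smooth v_regularized h.
have error_le := L2norm_error_le F_fourier T_gt0 p_gt1 gamma_gt0 E3_ge0 eps_gt0
  (ltW eps_lt1) L2phi L2phi_eps data_error u_exact u0_smooth v_regularized.
split=> //; rewrite -[h]add0r; apply: error_le.
by rewrite lexx (ltW T_gt0).
Qed.
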